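(* Let $\phi$ be a circuit all of whose constraints are windable. Then the signature $[\![\phi]\!]$ is windable.
   Context: For $x,y\in\{0,1\}^J$, $x\oplus y$ is coordinatewise addition mod 2, and $\mathbf S$ is the characteristic vector of $S\subseteq J$. For $z\in\{0,1\}^J$, $\mathrm{Match}'(z)$ is the set of partitions of $\{i:z_i=1\}$ into blocks of size 1 or 2. $F:\{0,1\}^J\to\mathbb{Q}_{\ge0}$ is windable if there exist $B(x,y,M)\ge0$ for all $x,y\in\{0,1\}^J$ and $M\in\mathrm{Match}'(x\oplus y)$ with (1) $F(x)F(y)=\sum_{M\in\mathrm{Match}'(x\oplus y)}B(x,y,M)$ for all $x,y$, and (2) $B(x,y,M)=B(x\oplus\mathbf S,y\oplus\mathbf S,M)$ for all $x,y$ and all $S\in M\in\mathrm{Match}'(x\oplus y)$. A circuit $\phi$ consists of: a finite set $J$ of incidences; a finite set $V$ of vertices with sets $J_v$ partitioning $J$; a set $A\subseteq J$ of external edges; a partition $E$ of $J\setminus A$ into pairs (internal edges); and constraints $F_v:\{0,1\}^{J_v}\to\mathbb{Q}_{\ge0}$. An assignment is $x\in\{0,1\}^J$ with $x_i=x_j$ for all $\{i,j\}\in E$; $\mathrm{wt}_\phi(x)=\prod_vF_v(x|_{J_v})$; the signature is $[\![\phi]\!]:\{0,1\}^A\to\mathbb{Q}_{\ge0}$, $[\![\phi]\!](x)=\sum\mathrm{wt}_\phi(x')$ over assignments $x'$ extending $x$. *)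

From HB Require Import structures.
From mathcomp Require Import all_boot all_order all_algebra.
Set Implicit Arguments. Unset Strict Implicit. Unset Printing Implicit Defensive.
Import Order.TTheory GRing.Theory Num.Theory.
Local Open Scope ring_scope.

(* Elements of {0,1}^K are represented by subsets of K (their supports);
   the characteristic vector of S is S itself. *)

(* x (+) y : coordinatewise addition mod 2 = symmetric difference *)
Definition symd (K : finType) (x y : {set K}) : {set K} := (x :\: y) :|: (y :\: x).

Definition isMatch (K : finType) (z : {set K}) (M : {set {set K}}) : bool :=
  partition M z && [forall S in M, (#|S| == 1)%N || (#|S| == 2)%N].

Definition windable (K : finType) (F : {set K} -> rat) : Prop :=
  (forall x, 0 <= F x) /\
  exists B : {set K} -> {set K} -> {set {set K}} -> rat,
    (forall x y M, 0 <= B x y M) /\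
    (forall x y, F x * F y = \sum_(M : {set {set K}} | isMatch (symd x y) M) B x y M) /\
    (forall x y M S, isMatch (symd x y) M -> S \in M ->
        B x y M = B (symd x S) (symd y S) M).

(* Circuits: incidences J, vertices V, owner j = the vertex v with j \in J_v,
   external edges A, internal edges E (a partition of J \ A into pairs),
   constraints F v : {0,1}^{J_v} -> Q. *)
Definition ext_t (J : finType) (A : {set J}) : finType := {j : J | j \in A}.
Definition inc_t (J V : finType) (owner : J -> V) (v : V) : finType :=
  {j : J | owner j == v}.

Definition restr (J V : finType) (owner : J -> V) (x : {set J}) (v : V)
  : {set inc_t owner v} := [set j : inc_t owner v | val j \in x].

Definition is_assignment (J : finType) (E : {set {set J}}) (x : {set J}) : bool :=
  [forall e in E, forall i in e, forall j in e, (i \in x) == (j \in x)].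

Definition wt (J V : finType) (owner : J -> V)
  (F : forall v : V, {set inc_t owner v} -> rat) (x : {set J}) : rat :=
  \prod_(v : V) F v (restr owner x v).

Definition extends (J : finType) (A : {set J}) (a : {set ext_t A}) (x : {set J}) : bool :=
  [forall j : ext_t A, (val j \in x) == (j \in a)].

Definition signature (J V : finType) (owner : J -> V) (A : {set J}) (E : {set {set J}})
  (F : forall v : V, {set inc_t owner v} -> rat) (a : {set ext_t A}) : rat :=
  \sum_(x : {set J} | is_assignment E x && extends a x) wt F x.

From HB Require Import structures.
From mathcomp Require Import all_boot all_order all_algebra.
From mathcomp Require Import zify ring.
Set Implicit Arguments. Unset Strict Implicit. Unset Printing Implicit Defensive.
Import Order.TTheory GRing.Theory Num.Theory.
Local Open Scope ring_scope.

(* The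
   proof carries a relative notion, [winds U G]: G is nonnegative and has a
   winding certificate B whose product and winding conditions are required
   only for arguments inside the coordinate set U.  The signature of a
   circuit is built from its constraints by two operations that preserve it:
   - product over disjoint coordinate sets (winds_mul): a matching of the
     union that splits along the two sets is a pair of matchings, and gets
     the product of their weights;
   - contraction of an internal edge e = {i, j} (winds_contract): summing
     over the common value on e, a matching of the remaining coordinates is
     weighted by all matchings with the two blocks through i and j merged;
     winding through the merged block is winding through both blocks. *)

Ltac membership_cases :=
  rewrite ?inE; repeat match goal with |- context [?z \in ?A] => case: (z \in A) end.

Section Matchings.
Variable J : finType.
Implicit Types (x y D U S T : {set J}) (M : {set {set J}}).

Lemma in_symd x y (z : J) : (z \in symd x y) = (z \in x) (+) (z \in y).
Proof. by rewrite /symd !inE; membership_cases. Qed.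

Lemma symd_sub x y U : x \subset U -> y \subset U -> symd x y \subset U.
Proof.
move=> /subsetP xU /subsetP yU; apply/subsetP => z; rewrite in_symd.
by case zx: (z \in x) => /=; [move=> _; apply: xU | move=> zy; apply: yU].
Qed.

Lemma disjoint_symd x y D : [disjoint x & D] -> [disjoint y & D] -> [disjoint symd x y & D].
Proof.
move=> dx dy; rewrite -setI_eq0; apply/eqP/setP => z; rewrite inE in_symd inE.
by case zD: (z \in D); rewrite ?andbF // (disjointFl dx zD) (disjointFl dy zD).
Qed.

Lemma symd_shift a b S : symd (symd a S) (symd b S) = symd a b.
Proof. by apply/setP => z; membership_cases. Qed.

Definition matching_spec D M :=
  [/\ forall S, S \in M -> S \subset D /\ ((#|S| == 1)%N || (#|S| == 2)%N),
      forall z, z \in D -> exists2 S, S \in M & z \in S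
    & forall S T z, S \in M -> T \in M -> z \in S -> z \in T -> S = T].

Lemma isMatchP D M : isMatch D M <-> matching_spec D M.
Proof.
split.
- move=> /andP[Hp /forallP Hsize]; split.
  + move=> S SM; split; first exact: partitionS Hp SM.
    by move: (Hsize S); rewrite SM.
  + move=> z; rewrite -(cover_partition Hp) => /bigcupP[S SM zS]; by exists S.
  + move=> S T z SM TM zS zT; apply/eqP; apply/negPn/negP => neq.
    have := trivIsetP (partition_trivIset Hp) S T SM TM neq.
    by move=> /disjointFr /(_ zS); rewrite zT.
- move=> [Hblock Hcover Hdisj]; apply/andP; split.
  + apply/and3P; split.
    * apply/eqP/setP => z; apply/bigcupP/idP => [[S SM zS]|zD].
      - by have [/subsetP SD _] := Hblock S SM; apply: SD.
      - by have [S SM zS] := Hcover z zD; exists S.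
    * apply/trivIsetP => S T SM TM neq; rewrite -setI_eq0; apply/eqP/setP => z.
      rewrite !inE; apply/negbTE/negP => /andP[zS zT].
      by move/eqP: neq; apply; exact: Hdisj zS zT.
    * by apply/negP => /Hblock[_]; rewrite cards0.
  + by apply/forallP => S; apply/implyP => /Hblock[].
Qed.

Lemma match_block_sub D M S : isMatch D M -> S \in M -> S \subset D.
Proof. by move=> /isMatchP[Hblock _ _] /Hblock[]. Qed.

Lemma match_block_nonempty D M S : isMatch D M -> S \in M -> exists z, z \in S.
Proof.
move=> /isMatchP[Hblock _ _] /Hblock[_]; have [->|[z zS]] := set_0Vmem S.
  by rewrite cards0.
by exists z.
Qed.

Lemma match_pblock D M w : isMatch D M ->
  (w \in D -> pblock M w \in M /\ w \in pblock M w) /\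
  (w \notin D -> pblock M w = set0).
Proof.
move=> /andP[Hp _]; have Hc := cover_partition Hp; split.
- by move=> wD; rewrite pblock_mem ?mem_pblock Hc.
- move=> wD; rewrite /pblock; case: pickP => //= S /andP[SM wS].
  by move: wD; rewrite -Hc; move/bigcupP => []; exists S.
Qed.

Lemma card_pblock_minus D M w : isMatch D M -> (#|pblock M w :\ w| <= 1)%N.
Proof.
move=> HM; have [Hin Hout] := match_pblock w HM.
have [wD|wD] := boolP (w \in D); last by rewrite (Hout wD) set0D cards0.
have [SM wS] := Hin wD; have /isMatchP[Hblock _ _] := HM.
have [_ Hsize] := Hblock _ SM; move: (cardsD1 w (pblock M w)); rewrite wS.
by case/orP: Hsize => /eqP ->; lia.
Qed.

End Matchings.

Definition winds (J : finType) (U : {set J}) (G : {set J} -> rat) : Prop :=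
  (forall x, 0 <= G x) /\
  exists B : {set J} -> {set J} -> {set {set J}} -> rat,
    (forall x y M, 0 <= B x y M) /\
    (forall x y : {set J}, x \subset U -> y \subset U ->
        G x * G y = \sum_(M | isMatch (symd x y) M) B x y M) /\
    (forall (x y : {set J}) M S, x \subset U -> y \subset U -> isMatch (symd x y) M ->
        S \in M -> B x y M = B (symd x S) (symd y S) M).

Section WindsBasics.
Variable J : finType.
Implicit Types (x y U : {set J}) (G : {set J} -> rat).

Lemma winds_eq U G G' : winds U G -> (forall x, 0 <= G' x) ->
  (forall x, x \subset U -> G x = G' x) -> winds U G'.
Proof.
move=> [_ [B [B0 [Bprod Bwind]]]] G'0 eqG; split => //; exists B.
split=> //; split=> // x y xU yU; rewrite -!eqG //; exact: Bprod.
Qed.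

(* The constant 1 winds over no coordinates: the only matching is the empty one. *)
Lemma winds_empty : winds set0 (fun _ : {set J} => 1).
Proof.
split => //; exists (fun _ _ M => (M == set0)%:R); split; first by move=> *; rewrite ler0n.
split.
- move=> x y; rewrite !subset0 => /eqP-> /eqP->.
  have -> : symd set0 set0 = set0 :> {set J} by apply/setP => z; rewrite in_symd !inE.
  rewrite (eq_bigl (pred1 set0)) ?big_pred1_eq ?eqxx ?mulr1 // => M.
  rewrite /isMatch partition_set0 /=; case: eqP => // ->.
  by apply/forallP => S; rewrite inE.
- move=> x y M S; rewrite !subset0 => /eqP-> /eqP-> HM SM.
  have [z zS] := match_block_nonempty HM SM.
  by have := subsetP (match_block_sub HM SM) z zS; rewrite in_symd !inE.
Qed.

End WindsBasics.

Section Product.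
Variable J : finType.
Implicit Types (x y D S : {set J}) (M : {set {set J}}).

Lemma disjoint_mem (U1 U2 : {set J}) z :
  [disjoint U1 & U2] -> z \in U1 -> z \in U2 -> False.
Proof. by move=> dis z1 z2; move: (disjointFr dis z1); rewrite z2. Qed.

Definition blocks_in M (U : {set J}) := [set S in M | S \subset U].

Lemma match_blocks_in D M (U : {set J}) : isMatch D M ->
  (forall z S, z \in D -> z \in U -> S \in M -> z \in S -> S \subset U) ->
  isMatch (D :&: U) (blocks_in M U).
Proof.
move=> /isMatchP[Hblock Hcover Hdisj] Hstay; apply/isMatchP; split.
- move=> S; rewrite inE => /andP[SM SU]; have [SD Hsize] := Hblock S SM.
  by rewrite subsetI SD SU.
- move=> z; rewrite inE => /andP[zD zU]; have [S SM zS] := Hcover z zD.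
  by exists S => //; rewrite inE SM (Hstay z S).
- by move=> S T z; rewrite !inE => /andP[SM _] /andP[TM _]; exact: Hdisj.
Qed.

Lemma match_union D1 D2 M1 M2 : [disjoint D1 & D2] ->
  isMatch D1 M1 -> isMatch D2 M2 -> isMatch (D1 :|: D2) (M1 :|: M2).
Proof.
move=> dis /isMatchP[Bl1 Co1 Di1] /isMatchP[Bl2 Co2 Di2]; apply/isMatchP; split.
- move=> S; rewrite inE => /orP[/Bl1|/Bl2] [SD ->]; split=> //;
    by apply: subset_trans SD _; rewrite ?subsetUl ?subsetUr.
- move=> z; rewrite inE => /orP[/Co1|/Co2] [S SM zS]; exists S; rewrite ?inE ?SM ?orbT //.
- have cross S T z : S \in M1 -> T \in M2 -> z \in S -> z \in T -> False.
    move=> /Bl1[/subsetP SD _] /Bl2[/subsetP TD _] zS zT.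
    exact: disjoint_mem dis (SD z zS) (TD z zT).
  move=> S T z; rewrite !inE => /orP[] SM /orP[] TM zS zT.
  + exact: Di1 zS zT.
  + by case: (cross S T z).
  + by case: (cross T S z).
  + exact: Di2 zS zT.
Qed.

(* M1 is recovered from M1 :|: M2 as its blocks inside U1, since the
   (nonempty) blocks of M2 lie inside U2. *)
Lemma blocks_in_union (U1 U2 : {set J}) D1 D2 M1 M2 : [disjoint U1 & U2] ->
  isMatch (D1 :&: U1) M1 ->
  isMatch (D2 :&: U2) M2 -> blocks_in (M1 :|: M2) U1 = M1.
Proof.
move=> dis H1 H2; apply/setP => S; rewrite !inE; case SM1: (S \in M1) => /=.
  by rewrite (subset_trans (match_block_sub H1 SM1)) ?subsetIr.
case SM2: (S \in M2) => //=; apply/negP => /subsetP SU1.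
have [z zS] := match_block_nonempty H2 SM2.
have := subsetP (match_block_sub H2 SM2) z zS; rewrite inE => /andP[_ zU2].
exact: disjoint_mem dis (SU1 z zS) zU2.
Qed.

Variables (U1 U2 : {set J}).
Hypothesis dis : [disjoint U1 & U2].

Definition splits M := [forall S in M, (S \subset U1) || (S \subset U2)].

(* Splitting matchings of D along (U1, U2) is a bijection with pairs of
   matchings of D :&: U1 and D :&: U2. *)
Lemma split_match D M : D \subset U1 :|: U2 ->
  [&& isMatch (D :&: U1) (blocks_in M U1), isMatch (D :&: U2) (blocks_in M U2)
     & blocks_in M U1 :|: blocks_in M U2 == M]
  = isMatch D M && splits M.
Proof.
move=> DU; apply/idP/idP.
- move=> /and3P[H1 H2 /eqP EM]; apply/andP; split.
  + rewrite -EM -[D](setIidPl DU) setIUr; apply: match_union H1 H2.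
    by apply: disjointWl (subsetIr D U1) _; apply: disjointWr (subsetIr D U2) dis.
  + apply/forallP => S; apply/implyP; rewrite -EM !inE.
    by case/orP => /andP[_ ->] //; rewrite orbT.
- move=> /andP[HM /forallP Hsplit].
  have stay (U V : {set J}) : [disjoint U & V] ->
      (forall S, S \in M -> (S \subset U) || (S \subset V)) ->
      isMatch (D :&: U) (blocks_in M U).
    move=> dUV HS; apply: match_blocks_in HM _ => z S _ zU SM zS.
    case/orP: (HS S SM) => // /subsetP SV.
    by case: (disjoint_mem dUV zU (SV z zS)).
  apply/and3P; split.
  + by apply: stay dis _ => S SM; move: (Hsplit S); rewrite SM.
  + apply: stay U1 _ _ => [|S SM]; first by rewrite disjoint_sym.
    by move: (Hsplit S); rewrite SM orbC.
  + apply/eqP/setP => S; rewrite !inE; case SM: (S \in M) => //=.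
    by move: (Hsplit S); rewrite SM.
Qed.

Lemma symdI x y (U : {set J}) : symd x y :&: U = symd (x :&: U) (y :&: U).
Proof. by apply/setP => z; membership_cases. Qed.

Lemma symdI_in x S (U : {set J}) : S \subset U -> symd x S :&: U = symd (x :&: U) S.
Proof.
move=> /subsetP SU; apply/setP => z; rewrite !inE.
by case zS: (z \in S); [rewrite (SU z zS) |]; membership_cases.
Qed.

Lemma symdI_out x S (U : {set J}) : [disjoint S & U] -> symd x S :&: U = x :&: U.
Proof.
move=> dSU; apply/setP => z; rewrite !inE.
case zS: (z \in S); last by membership_cases.
by rewrite (disjointFr dSU zS); membership_cases.
Qed.

(* Windability is preserved by products over disjoint sets of coordinates:
   the weight of a split matching is the product of the weights of its two
   halves, and a non-split matching gets weight 0. *)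
Lemma winds_mul (G1 G2 : {set J} -> rat) : winds U1 G1 -> winds U2 G2 ->
  winds (U1 :|: U2) (fun x => G1 (x :&: U1) * G2 (x :&: U2)).
Proof.
move=> [G1_0 [B1 [B1_0 [B1prod B1wind]]]] [G2_0 [B2 [B2_0 [B2prod B2wind]]]].
split=> [x|]; first exact: mulr_ge0.
exists (fun x y M => if splits M then B1 (x :&: U1) (y :&: U1) (blocks_in M U1)
                       * B2 (x :&: U2) (y :&: U2) (blocks_in M U2) else 0).
split=> [x y M|]; first by case: ifP => // _; rewrite mulr_ge0.
split=> [x y xU yU | x y M S xU yU HM SM].
- rewrite mulrACA B1prod ?subsetIr // B2prod ?subsetIr // -!symdI.
  rewrite big_distrlr /= pair_big /=.
  rewrite (reindex_onto (fun M => (blocks_in M U1, blocks_in M U2))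
                        (fun p => p.1 :|: p.2)) /=; last first.
    move=> [M1 M2] /= /andP[H1 H2]; congr pair; first exact: blocks_in_union dis H1 H2.
    have dis21 : [disjoint U2 & U1] by rewrite disjoint_sym.
    by rewrite setUC (blocks_in_union dis21 H2 H1).
  rewrite big_mkcond [RHS]big_mkcond; apply: eq_bigr => M _.
  rewrite -andbA (split_match M (symd_sub xU yU)).
  by case: (isMatch _ M); case: (splits M).
- case Hsplit: (splits M) => //.
  have := split_match M (symd_sub xU yU); rewrite HM Hsplit => /and3P[H1 H2 _].
  move: (Hsplit) => /forallP/(_ S); rewrite SM /= => /orP[SU1|SU2].
  + have dS : [disjoint S & U2] by apply: disjointWl SU1 dis.
    rewrite !(symdI_out _ dS) !(symdI_in _ SU1); congr (_ * _).
    by apply: B1wind; rewrite ?subsetIr -?symdI // inE SM SU1.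
  + have dS : [disjoint S & U1].
      by rewrite disjoint_sym; apply: disjointWr SU2 dis.
    rewrite !(symdI_out _ dS) !(symdI_in _ SU2); congr (_ * _).
    by apply: B2wind; rewrite ?subsetIr -?symdI // inE SM SU2.
Qed.

End Product.

Section Contraction.
Variable J : finType.
Implicit Types (x y a D S T W : {set J}) (M : {set {set J}}).
Variables (e : {set J}) (i j : J).
Hypotheses (neq_ij : i != j) (e_ij : e = [set i; j]).

Lemma in_edge z : (z \in e) = (z == i) || (z == j).
Proof. by rewrite e_ij !inE. Qed.

Definition with_edge x (b : bool) := if b then x :|: e else x.
(* Kept folded by simplification, so that the side of the edge stays visible. *)
#[global] Arguments with_edge : simpl never.

Definition merged M := (pblock M i :|: pblock M j) :\: e.
Definition away M := [set S in M | [disjoint S & e]].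
Definition contract M := (away M :|: [set merged M]) :\ set0.

Lemma in_contract M S :
  (S \in contract M) = (S != set0) && ((S \in away M) || (S == merged M)).
Proof. by rewrite !inE. Qed.

Lemma merged_disjoint M : [disjoint merged M & e].
Proof. by rewrite -setI_eq0; apply/eqP/setP => z; rewrite !inE; case: (z \in e); rewrite ?andbF. Qed.

Lemma disjoint_edge_ex S : ~~ [disjoint S & e] -> exists2 w, w \in S & w \in e.
Proof.
rewrite -setI_eq0 => /set0Pn[w]; rewrite inE => /andP[wS we]; by exists w.
Qed.

Section ContractMatching.
Variables (D Dh : {set J}) (M : {set {set J}}).
Hypotheses (DP : [disjoint D & e]) (D_Dh : D \subset Dh) (Dh_D : Dh \subset D :|: e)
           (HM : isMatch Dh M).

Lemma card_merged : (#|merged M| <= 2)%N.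
Proof.
apply: (@leq_trans #|(pblock M i :\ i) :|: (pblock M j :\ j)|).
  apply: subset_leq_card; apply/subsetP => z; rewrite !inE in_edge.
  by case/andP => /norP[zi zj] /orP[] ->; rewrite ?zi ?zj ?orbT.
have := cardsUI (pblock M i :\ i) (pblock M j :\ j).
have := card_pblock_minus i HM; have := card_pblock_minus j HM; lia.
Qed.

Lemma in_pblock_dom w z : z \in pblock M w -> z \in D :|: e.
Proof.
have [Hin Hout] := match_pblock w HM; have [wD|wD] := boolP (w \in Dh).
  have [SM _] := Hin wD; move=> /(subsetP (match_block_sub HM SM)).
  exact: (subsetP Dh_D).
by rewrite (Hout wD) inE.
Qed.

Lemma merged_sub : merged M \subset D.
Proof.
apply/subsetP => z; rewrite inE => /andP[ze zp].
have : z \in D :|: e by case/setUP: zp => /in_pblock_dom.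
by rewrite inE (negbTE ze) orbF.
Qed.

Lemma away_sub S : S \in away M -> S \subset D.
Proof.
rewrite inE => /andP[SM Sd]; apply/subsetP => z zS.
have := subsetP Dh_D z (subsetP (match_block_sub HM SM) z zS).
rewrite inE => /orP[] // ze.
by move: (disjointFr Sd zS); rewrite ze.
Qed.

Lemma merged_meets S z : S \in M -> z \in S -> z \in merged M -> ~~ [disjoint S & e].
Proof.
move=> SM zS; rewrite inE => /andP[_ zp].
have [w [wp we]] : exists w, z \in pblock M w /\ w \in e.
  by case/setUP: zp => zp; [exists i | exists j]; rewrite in_edge eqxx ?orbT.
have wD : w \in Dh.
  by apply/negPn/negP => /(match_pblock w HM).2 pb0; rewrite pb0 inE in wp.
have [pM wp'] := (match_pblock w HM).1 wD; have /isMatchP[_ _ Hdisj] := HM.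
rewrite (Hdisj _ _ _ SM pM zS wp); apply/negP => /disjointFr/(_ wp').
by rewrite we.
Qed.

Lemma contract_match : isMatch D (contract M).
Proof.
have /isMatchP[Hblock Hcover Hdisj] := HM; apply/isMatchP; split.
- move=> S; rewrite in_contract => /andP[S0 /orP[SK|/eqP ES]]; last subst S.
    split; first exact: away_sub.
    by move: SK; rewrite inE => /andP[/Hblock[]].
  split; first exact: merged_sub.
  by move: S0 card_merged; rewrite -card_gt0; lia.
- move=> z zD; have [S SM zS] := Hcover z (subsetP D_Dh z zD).
  have nonempty T : z \in T -> T != set0 by move=> zT; apply/set0Pn; exists z.
  case Sd: [disjoint S & e].
    by exists S; rewrite // in_contract nonempty //= inE SM Sd.
  have zW : z \in merged M.
    have [w wS we] := disjoint_edge_ex (negbT Sd).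
    have pbw : pblock M w = S.
      by apply: def_pblock SM wS; case/andP: HM => /partition_trivIset.
    rewrite inE (disjointFr DP zD) inE.
    by move: we; rewrite in_edge => /orP[] /eqP <-; rewrite pbw zS ?orbT.
  by exists (merged M); rewrite // in_contract eqxx orbT andbT nonempty.
- move=> S T z; rewrite !in_contract => /andP[_ HS] /andP[_ HT] zS zT.
  case/orP: HS => [|/eqP ES]; case/orP: HT => [|/eqP ET].
  + by rewrite !inE => /andP[SM _] /andP[TM _]; exact: Hdisj zS zT.
  + rewrite inE => /andP[SM Sd]; rewrite ET in zT.
    by move: (merged_meets SM zS zT); rewrite Sd.
  + rewrite inE => /andP[TM Td]; rewrite ES in zS.
    by move: (merged_meets TM zT zS); rewrite Td.
  + by rewrite ES ET.
Qed.

End ContractMatching.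

(* Unions are expanded only after symd, since in_setU would otherwise
   unfold symd itself. *)
Lemma symd_with_edge x y b1 b2 : [disjoint x & e] -> [disjoint y & e] ->
  symd (with_edge x b1) (with_edge y b2) = symd x y :|: (if b1 (+) b2 then e else set0).
Proof.
move=> dx dy; apply/setP => z; rewrite [in RHS]in_setU /with_edge.
case: b1; case: b2; rewrite /= !in_symd ?in_setU ?in_set0; case ze: (z \in e);
by rewrite ?(disjointFl dx ze) ?(disjointFl dy ze); membership_cases.
Qed.

Lemma with_edge_symd x S b : [disjoint S & e] ->
  with_edge (symd x S) b = symd (with_edge x b) S.
Proof.
move=> dS; apply/setP => z; rewrite /with_edge; case: b; last by [].
rewrite [in LHS]in_setU !in_symd in_setU; case ze: (z \in e);
by rewrite ?(disjointFl dS ze); membership_cases.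
Qed.

Lemma with_edge_flip x W b : [disjoint x & e] -> [disjoint W & e] ->
  symd (symd (with_edge x b) e) W = with_edge (symd x W) (~~ b).
Proof.
move=> dx dW; apply/setP => z; rewrite /with_edge; case: b => /=;
  last rewrite [in RHS]in_setU; rewrite !in_symd ?in_setU; case ze: (z \in e);
by rewrite ?(disjointFl dx ze) ?(disjointFl dW ze); membership_cases.
Qed.

Section EdgeBlocks.
Variables (D : {set J}) (M : {set {set J}}).
Hypotheses (HM : isMatch D M) (iD : i \in D) (jD : j \in D)
           (nonempty_merged : merged M != set0).

Lemma edge_blocks_disjoint z : z \in pblock M i -> z \in pblock M j -> False.
Proof.
move=> zi zj; have [iM ii] := (match_pblock i HM).1 iD.
have [jM jj] := (match_pblock j HM).1 jD.
have /isMatchP[Hblock _ Hdisj] := HM; have same := Hdisj _ _ _ iM jM zi zj.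
have edge_sub : e \subset pblock M i.
  by apply/subsetP => w; rewrite in_edge => /orP[] /eqP->; rewrite ?same in ii *.
have [_ Hsize] := Hblock _ iM.
have edge_eq : e = pblock M i.
  by apply/eqP; rewrite eqEcard edge_sub e_ij cards2 neq_ij; case/orP: Hsize => /eqP->.
by move/negP: nonempty_merged; apply; rewrite /merged -same setUid -edge_eq setDv.
Qed.

Lemma symd_edge_blocks a :
  symd (symd a (pblock M i)) (pblock M j) = symd (symd a e) (merged M).
Proof.
have ii := ((match_pblock i HM).1 iD).2; have jj := ((match_pblock j HM).1 jD).2.
apply/setP => z; rewrite !in_symd /merged !inE.
case ze: (z \in e).
  move: ze; rewrite in_edge => /orP[] /eqP->.
  - have /negbTE-> : i \notin pblock M j by apply/negP => /(edge_blocks_disjoint ii).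
    by rewrite ii; case: (i \in a).
  - have /negbTE-> : j \notin pblock M i by apply/negP => /edge_blocks_disjoint; apply.
    by rewrite jj; case: (j \in a).
case zi: (z \in pblock M i); case zj: (z \in pblock M j) => //=;
  by [case: (edge_blocks_disjoint zi zj) | case: (z \in a)].
Qed.

End EdgeBlocks.

Definition masked (B : {set J} -> {set J} -> {set {set J}} -> rat) x y M :=
  if isMatch (symd x y) M then B x y M else 0.

Section ContractWinding.
Variables (U : {set J}) (G : {set J} -> rat) (B : {set J} -> {set J} -> {set {set J}} -> rat).
Hypotheses (e_U : e \subset U) (B0 : forall x y M, 0 <= B x y M)
  (Bprod : forall x y, x \subset U -> y \subset U ->
     G x * G y = \sum_(M | isMatch (symd x y) M) B x y M)
  (Bwind : forall x y M S, x \subset U -> y \subset U -> isMatch (symd x y) M ->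
     S \in M -> B x y M = B (symd x S) (symd y S) M).

Lemma masked_ge0 x y M : 0 <= masked B x y M.
Proof. by rewrite /masked; case: ifP. Qed.

Lemma masked_prod x y : x \subset U -> y \subset U -> G x * G y = \sum_M masked B x y M.
Proof. by move=> xU yU; rewrite Bprod // big_mkcond. Qed.

Lemma masked_wind x y M S : x \subset U -> y \subset U -> S \in M ->
  masked B x y M = masked B (symd x S) (symd y S) M.
Proof. by move=> xU yU SM; rewrite /masked symd_shift; case: ifP => // HM; apply: Bwind. Qed.

Lemma with_edge_sub x b : x \subset U :\: e -> with_edge x b \subset U.
Proof.
rewrite subsetD => /andP[xU _]; case: b => //=; by rewrite subUset xU e_U.
Qed.

(* If the domain misses the edge, nothing is merged: same-side extensions
   carry no weight on matchings with a nonempty merged block. *)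
Lemma masked_same_side x y b M : [disjoint x & e] -> [disjoint y & e] ->
  merged M != set0 -> masked B (with_edge x b) (with_edge y b) M = 0.
Proof.
move=> dx dy W0; rewrite /masked symd_with_edge // addbb setU0; case: ifP => // HM.
have out w : w \in e -> pblock M w = set0.
  move=> we; apply: (match_pblock w HM).2; rewrite in_symd (disjointFl dx we).
  by rewrite (disjointFl dy we).
by move: W0; rewrite /merged !out ?in_edge ?eqxx ?orbT // setU0 set0D eqxx.
Qed.

(* Winding through the two blocks at i and at j moves an opposite-side pair
   across the merged block W, exchanging the sides of the edge. *)
Lemma masked_through_merged x y b M : x \subset U :\: e -> y \subset U :\: e ->
  merged M != set0 ->
  masked B (with_edge x b) (with_edge y (~~ b)) M
  = masked B (with_edge (symd x (merged M)) (~~ b)) (with_edge (symd y (merged M)) b) M.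
Proof.
move=> xUe yUe W0; move: (xUe) (yUe); rewrite !subsetD => /andP[xU dx] /andP[yU dy].
set W := merged M; have dW : [disjoint W & e] by apply: merged_disjoint.
have dom : symd (with_edge x b) (with_edge y (~~ b)) = symd x y :|: e.
  by rewrite symd_with_edge // addbN addbb.
have dom' : symd (with_edge (symd x W) (~~ b)) (with_edge (symd y W) b) = symd x y :|: e.
  by rewrite !with_edge_symd // symd_shift symd_with_edge // addNb addbb.
have [HM|nHM] := boolP (isMatch (symd x y :|: e) M); last by rewrite /masked dom dom' (negbTE nHM).
have dom_U : symd x y :|: e \subset U by rewrite subUset symd_sub.
have end_dom w : w \in e -> w \in symd x y :|: e by move=> we; rewrite inE we orbT.
have iD : i \in symd x y :|: e by apply: end_dom; rewrite in_edge eqxx.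
have jD : j \in symd x y :|: e by apply: end_dom; rewrite in_edge eqxx orbT.
have [SiM _] := (match_pblock i HM).1 iD; have [SjM _] := (match_pblock j HM).1 jD.
have blockU S : S \in M -> S \subset U by move=> SM; apply: subset_trans (match_block_sub HM SM) dom_U.
rewrite (masked_wind _ _ SiM) ?with_edge_sub // (masked_wind _ _ SjM); last first.
- by apply: symd_sub (with_edge_sub _ yUe) (blockU _ SiM).
- by apply: symd_sub (with_edge_sub _ xUe) (blockU _ SiM).
by rewrite !(symd_edge_blocks HM iD jD W0) !with_edge_flip // negbK.
Qed.

(* The weight of a matching M of the contracted domain: all ways of placing
   both arguments on either side of the edge, over all matchings Mh
   contracting to M. *)
Definition lifted x y Mh :=
  \sum_(b1 : bool) \sum_(b2 : bool) masked B (with_edge x b1) (with_edge y b2) Mh.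
Definition contracted x y M := \sum_(Mh | contract Mh == M) lifted x y Mh.

Lemma contracted_ge0 x y M : 0 <= contracted x y M.
Proof. by do 3 (apply: sumr_ge0 => ? _); apply: masked_ge0. Qed.

Lemma lifted_match x y Mh b1 b2 : x \subset U :\: e -> y \subset U :\: e ->
  isMatch (symd (with_edge x b1) (with_edge y b2)) Mh -> isMatch (symd x y) (contract Mh).
Proof.
move=> xUe yUe; have := symd_sub xUe yUe; rewrite subsetD => /andP[_ dxy].
move: (xUe) (yUe); rewrite !subsetD => /andP[_ dx] /andP[_ dy].
rewrite symd_with_edge //; apply: contract_match => //; first exact: subsetUl.
by rewrite subUset subsetUl; case: (b1 (+) b2); rewrite ?sub0set ?subsetUr.
Qed.

(* The product condition: expand both factors over the sides of the edge,
   then group the matchings Mh by their contraction. *)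
Lemma contracted_prod x y : x \subset U :\: e -> y \subset U :\: e ->
  (G x + G (x :|: e)) * (G y + G (y :|: e))
  = \sum_(M | isMatch (symd x y) M) contracted x y M.
Proof.
move=> xUe yUe; transitivity (\sum_Mh lifted x y Mh).
  rewrite exchange_big /=; under eq_bigr => b1 _ do rewrite exchange_big /=.
  under eq_bigr => b1 _ do under eq_bigr => b2 _ do
    rewrite -masked_prod ?with_edge_sub //.
  by rewrite !big_bool /with_edge /=; ring.
rewrite (bigID (fun Mh => isMatch (symd x y) (contract Mh))) /=.
rewrite [X in _ + X]big1 ?addr0 => [|Mh /negbTE nHM]; last first.
  apply: big1 => b1 _; apply: big1 => b2 _; rewrite /masked; case: ifP => //.
  by move=> /(lifted_match xUe yUe); rewrite nHM.
rewrite (partition_big contract (isMatch (symd x y))) //=.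
apply: eq_bigr => M HM; apply: eq_bigl => Mh.
by case: eqP => [->|]; rewrite ?HM ?andbF.
Qed.

Lemma lifted_wind x y Mh S : x \subset U :\: e -> y \subset U :\: e ->
  S \in contract Mh -> lifted x y Mh = lifted (symd x S) (symd y S) Mh.
Proof.
move=> xUe yUe; move: (xUe) (yUe); rewrite !subsetD => /andP[_ dx] /andP[_ dy].
rewrite in_contract => /andP[S0 /orP[|/eqP ES]].
  rewrite inE => /andP[SMh dS]; apply: eq_bigr => b1 _; apply: eq_bigr => b2 _.
  by rewrite !with_edge_symd //; apply: masked_wind; rewrite ?with_edge_sub.
rewrite ES in S0 *; have dW := merged_disjoint Mh.
have dxW := disjoint_symd dx dW; have dyW := disjoint_symd dy dW.
have Ht := masked_through_merged true xUe yUe S0.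
have Hf := masked_through_merged false xUe yUe S0.
rewrite /lifted !big_bool /= in Ht Hf *; rewrite Ht Hf.
rewrite (masked_same_side true dx dy S0) (masked_same_side false dx dy S0).
rewrite (masked_same_side true dxW dyW S0) (masked_same_side false dxW dyW S0).
by rewrite !add0r !addr0 addrC.
Qed.

End ContractWinding.

Lemma winds_contract (U : {set J}) (G : {set J} -> rat) : e \subset U -> winds U G ->
  winds (U :\: e) (fun x => G x + G (x :|: e)).
Proof.
move=> e_U [G0 [B [B0 [Bprod Bwind]]]]; split=> [x|]; first exact: addr_ge0.
exists (contracted B); split=> [x y M|]; first exact: contracted_ge0.
split=> [x y xUe yUe | x y M S xUe yUe HM SM].
  exact: (contracted_prod e_U Bprod xUe yUe).
apply: eq_bigr => Mh /eqP EM; apply: (lifted_wind e_U Bwind) => //; by rewrite EM.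
Qed.

End Contraction.

Section Transport.
Variables (J : finType) (p : pred J).
Local Notation T := {z : J | p z}.
Implicit Types (a b s : {set T}) (m : {set {set T}}) (x y : {set J}) (M : {set {set J}}).

Definition coords : {set J} := [set z | p z].
Definition embed a : {set J} := [set val t | t in a].
Definition embedM m : {set {set J}} := [set embed s | s in m].
Definition project x : {set T} := [set t | val t \in x].
Definition projectM M : {set {set T}} := [set project S | S in M].

Lemma mem_embed a (t : T) : (val t \in embed a) = (t \in a).
Proof. by rewrite mem_imset //; apply: val_inj. Qed.

Lemma notin_embed a z : ~~ p z -> z \notin embed a.
Proof. by move=> pz; apply/imsetP => [[t _ Ez]]; move: pz; rewrite Ez (valP t). Qed.

Lemma embed_sub a : embed a \subset coords.
Proof. by apply/subsetP => z /imsetP[t _ ->]; rewrite inE (valP t). Qed.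

Lemma embedK a : project (embed a) = a.
Proof. by apply/setP => t; rewrite inE mem_embed. Qed.

Lemma projectK x : x \subset coords -> embed (project x) = x.
Proof.
move=> /subsetP xp; apply/setP => z; have [pz|pz] := boolP (p z).
  by rewrite -[z](SubK T pz) mem_embed inE.
rewrite (negbTE (notin_embed _ pz)); apply/esym/negP => /xp; by rewrite inE (negbTE pz).
Qed.

Lemma embed_symd a b : embed (symd a b) = symd (embed a) (embed b).
Proof.
apply/setP => z; have [pz|pz] := boolP (p z).
  by rewrite -[z](SubK T pz) !in_symd !mem_embed in_symd.
by rewrite in_symd !(negbTE (notin_embed _ pz)).
Qed.

Lemma project_symd x y : project (symd x y) = symd (project x) (project y).
Proof. by apply/setP => t; membership_cases. Qed.

Lemma isMatch_embed d m : isMatch (embed d) (embedM m) = isMatch d m.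
Proof.
have embed_inj : injective embed.
  by move=> s1 s2 E; rewrite -[s1]embedK -[s2]embedK E.
rewrite /isMatch /embedM /embed imset_partition; last exact: val_inj.
congr andb; apply/forallP/forallP => H s; apply/implyP => sm.
  by move: (H (embed s)); rewrite mem_imset // sm card_imset //; apply: val_inj.
move: sm => /imsetP[s' s'm ->]; move: (H s'); rewrite s'm card_imset //.
exact: val_inj.
Qed.

Lemma embedMK m : projectM (embedM m) = m.
Proof.
rewrite /projectM /embedM -imset_comp (eq_in_imset (g := id)) ?imset_id //.
by move=> s _ /=; rewrite embedK.
Qed.

Lemma projectMK d M : isMatch (embed d) M -> embedM (projectM M) = M.
Proof.
move=> HM; rewrite /projectM /embedM -imset_comp (eq_in_imset (g := id)) ?imset_id //.
move=> S SM /=; rewrite projectK //; apply: subset_trans (match_block_sub HM SM) _.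
exact: embed_sub.
Qed.

Lemma sum_embed d (f : {set {set J}} -> rat) :
  \sum_(M | isMatch (embed d) M) f M = \sum_(m | isMatch d m) f (embedM m).
Proof.
rewrite (reindex_onto embedM projectM) => [|M HM]; last exact: projectMK HM.
by apply: eq_bigl => m; rewrite isMatch_embed embedMK eqxx andbT.
Qed.

Lemma symd_projectK x y : x \subset coords -> y \subset coords ->
  symd x y = embed (symd (project x) (project y)).
Proof. by move=> xp yp; rewrite embed_symd !projectK. Qed.

Lemma winds_of_windable (F : {set T} -> rat) :
  windable F -> winds coords (fun x => F (project x)).
Proof.
move=> [F0 [B [B0 [Bprod Bwind]]]]; split=> [x|]; first exact: F0.
exists (fun x y M => B (project x) (project y) (projectM M)); split=> [x y M|]; first exact: B0.
split=> [x y xp yp | x y M S xp yp HM SM].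
  by rewrite (symd_projectK xp yp) sum_embed Bprod; apply: eq_bigr => m _; rewrite embedMK.
rewrite !project_symd; apply: Bwind; last exact: imset_f.
by rewrite -isMatch_embed (projectMK (d := symd (project x) (project y))) -?symd_projectK.
Qed.

Lemma windable_of_winds (G : {set J} -> rat) (F : {set T} -> rat) :
  winds coords G -> (forall a, F a = G (embed a)) -> windable F.
Proof.
move=> [G0 [B [B0 [Bprod Bwind]]]] FG; split=> [a|]; first by rewrite FG.
exists (fun a b m => B (embed a) (embed b) (embedM m)); split=> [a b m|]; first exact: B0.
split=> [a b | a b m s Hm sm].
  by rewrite !FG Bprod ?embed_sub // -embed_symd sum_embed.
rewrite !embed_symd; apply: Bwind; rewrite ?embed_sub ?imset_f //.
by rewrite -embed_symd isMatch_embed.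
Qed.

End Transport.

Section Assignments.
Variable J : finType.
Implicit Types (U x a e : {set J}) (E : {set {set J}}).

Definition agrees U x a := [forall z in U, (z \in x) == (z \in a)].

Lemma in_with_edge e a b z : (z \in with_edge e a b) = (z \in a) || b && (z \in e).
Proof. by rewrite /with_edge; case: b; rewrite ?inE ?orbF. Qed.

Lemma agrees_with_edge U e (i j : J) x a b : e = [set i; j] -> e \subset U ->
  a \subset U :\: e ->
  agrees U x (with_edge e a b) =
  [&& (i \in x) == (j \in x), agrees (U :\: e) x a & (i \in x) == b].
Proof.
move=> e_ij /subsetP eU; rewrite subsetD => /andP[_ dae].
have ie : i \in e by rewrite e_ij !inE eqxx.
have je : j \in e by rewrite e_ij !inE eqxx orbT.
have on_edge z : z \in e -> (z \in with_edge e a b) = b.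
  by move=> ze; rewrite in_with_edge ze (disjointFl dae ze) andbT.
apply/forallP/and3P => [H | [/eqP ij_same /forallP H ib]].
- have at_end z : z \in e -> (z \in x) = b.
    by move=> ze; move: (H z); rewrite eU // on_edge // => /eqP.
  rewrite !at_end //; split=> //; apply/forallP => z; apply/implyP.
  rewrite inE => /andP[ze zU]; move: (H z); rewrite zU in_with_edge (negbTE ze).
  by rewrite andbF orbF.
- move=> z; apply/implyP => zU; case ze: (z \in e).
    rewrite on_edge //; move: ze; rewrite e_ij !inE => /orP[] /eqP->;
    by rewrite -?ij_same.
  by move: (H z); rewrite inE ze zU in_with_edge ze andbF orbF.
Qed.

Lemma is_assignment_setU1 e E x : is_assignment (e |: E) x =
  [forall i in e, forall j in e, (i \in x) == (j \in x)] && is_assignment E x.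
Proof.
rewrite /is_assignment; apply/forallP/andP => [H|[He /forallP HE] e'].
  split; first by move: (H e); rewrite setU11.
  apply/forallP => e'; apply/implyP => e'E; move: (H e'); rewrite inE e'E orbT.
  exact.
by apply/implyP; rewrite !inE => /orP[/eqP->|e'E] //; move: (HE e'); rewrite e'E.
Qed.

Lemma consistent_pair (i j : J) x :
  [forall u in [set i; j], forall w in [set i; j], (u \in x) == (w \in x)]
  = ((i \in x) == (j \in x)).
Proof.
apply/idP/idP => [|/eqP same].
  by move=> /forallP/(_ i); rewrite !inE eqxx => /forallP/(_ j); rewrite !inE eqxx orbT.
apply/forallP => u; apply/implyP; rewrite !inE => /orP[] /eqP->;
apply/forallP => w; apply/implyP; rewrite !inE => /orP[] /eqP->; by rewrite ?same.
Qed.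

End Assignments.

Section Circuit.
Variables (J V : finType) (owner : J -> V) (E : {set {set J}}).
Hypotheses (trivE : trivIset E) (E2 : forall e, e \in E -> #|e| = 2%N).
Variable F : forall v : V, {set inc_t owner v} -> rat.
Arguments F : clear implicits.
Hypothesis HF : forall v : V, windable (F v).

Definition incidences (s : seq V) : {set J} := [set z | owner z \in s].

Lemma restr_setI (x U : {set J}) v : coords (fun z => owner z == v) \subset U ->
  restr owner (x :&: U) v = restr owner x v.
Proof.
move=> /subsetP vU; apply/setP => t; rewrite !inE.
by rewrite (vU (val t)) ?andbT // inE (valP t).
Qed.

Lemma wt_ge0 x : 0 <= wt F x.
Proof. by apply: prodr_ge0 => v _; have [] := HF v. Qed.

(* The product of the constraints at the distinct vertices of s winds over
   their incidences: each constraint winds over its own incidences (through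
   the transport, restr being project), and these are pairwise disjoint. *)
Lemma winds_vertices (s : seq V) : uniq s ->
  winds (incidences s) (fun x => \prod_(v <- s) F v (restr owner x v)).
Proof.
elim: s => [_|v s IH /= /andP[vs us]].
  have -> : incidences [::] = set0 by apply/setP => z; rewrite !inE.
  by apply: winds_eq (@winds_empty J) _ _ => x; rewrite big_nil.
have dis : [disjoint coords (fun z => owner z == v) & incidences s].
  rewrite -setI_eq0; apply/eqP/setP => z; rewrite !inE.
  by apply/negP => /andP[/eqP ov zs]; rewrite -ov zs in vs.
have -> : incidences (v :: s) = coords (fun z => owner z == v) :|: incidences s.
  by apply/setP => z; rewrite !inE.
apply: winds_eq (winds_mul dis (winds_of_windable (HF v)) (IH us)) _ _ => [x|x _].
  by apply: prodr_ge0 => w _; have [] := HF w.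
rewrite big_cons; congr (_ * _).
  by congr (F v); apply/setP => t; rewrite !inE (valP t) andbT.
rewrite big_seq [RHS]big_seq; apply: eq_bigr => w ws; rewrite restr_setI //.
by apply/subsetP => z; rewrite !inE => /eqP->.
Qed.

Lemma winds_wt : winds setT (wt F).
Proof.
have := winds_vertices (enum_uniq V).
have -> : incidences (enum V) = setT by apply/setP => z; rewrite !inE mem_enum.
by move/winds_eq; apply=> [x|x _]; [apply: wt_ge0 | rewrite big_enum].
Qed.

(* The signature of the subcircuit keeping only the internal edges in E':
   the free coordinates are those outside cover E'. *)
Definition partial_sig (E' : {set {set J}}) (a : {set J}) : rat :=
  \sum_(x | is_assignment E' x && agrees (~: cover E') x a) wt F x.

Lemma partial_sig_ge0 E' a : 0 <= partial_sig E' a.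
Proof. by apply: sumr_ge0 => x _; apply: wt_ge0. Qed.

Lemma partial_sig0 a : partial_sig set0 a = wt F a.
Proof.
rewrite /partial_sig /cover big_set0 setC0 (eq_bigl (pred1 a)) ?big_pred1_eq // => x.
have -> : is_assignment set0 x by apply/forallP => e; rewrite inE.
apply/forallP/eqP => [H|->]; last by move=> z; rewrite eqxx implybT.
by apply/setP => z; move: (H z); rewrite inE => /eqP.
Qed.

Lemma free_setU1 e (E' : {set {set J}}) : e \notin E' ->
  ~: cover (e |: E') = ~: cover E' :\: e.
Proof. by move=> eE'; apply/setP => z; rewrite /cover big_setU1 // !inE negb_or andbC. Qed.

Lemma partial_sig_setU1 (E' : {set {set J}}) e (i j : J) (a : {set J}) :
  e = [set i; j] -> e \notin E' -> [disjoint e & cover E'] -> a \subset ~: cover E' :\: e ->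
  partial_sig (e |: E') a = \sum_(b : bool) partial_sig E' (with_edge e a b).
Proof.
move=> e_ij eE' de aU.
have eU : e \subset ~: cover E' by rewrite subsets_disjoint setCK.
rewrite /partial_sig free_setU1 // big_bool (bigID (fun x : {set J} => i \in x)) /=.
have pair_consistent (x : {set J}) :
    [forall u in e, forall w in e, (u \in x) == (w \in x)] = ((i \in x) == (j \in x)).
  by rewrite e_ij consistent_pair.
congr (_ + _); apply: eq_bigl => x;
  rewrite is_assignment_setU1 pair_consistent (agrees_with_edge _ _ e_ij eU aU);
  by case: (i \in x); case: (j \in x); case: (is_assignment E' x);
     case: (agrees _ x a); rewrite ?andbT ?andbF.
Qed.

Lemma edge_disjoint_cover e (E' : {set {set J}}) :
  e \in E -> E' \subset E -> e \notin E' -> [disjoint e & cover E'].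
Proof.
move=> eE E'E eE'; apply: bigcup_disjoint => e' e'E'.
apply: (trivIsetP trivE) => //; first exact: (subsetP E'E).
by apply: contraNneq eE' => ->.
Qed.

Lemma winds_partial_sig (E' : {set {set J}}) : E' \subset E ->
  winds (~: cover E') (partial_sig E').
Proof.
have [n] := ubnP #|E'|; elim: n E' => // n IH E' cardE' E'E.
have [->|[e eE']] := set_0Vmem E'.
  rewrite /cover big_set0 setC0; apply: winds_eq winds_wt _ _ => [a|a _].
    exact: partial_sig_ge0.
  by rewrite partial_sig0.
set E'' := E' :\ e; have eE : e \in E := subsetP E'E e eE'.
have E''E : E'' \subset E by apply: subset_trans (subsetDl _ _) E'E.
have eE'' : e \notin E'' by rewrite setD11.
have [i [j [ij e_ij]]] : exists i j, i != j /\ e = [set i; j].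
  by apply/cards2P; rewrite E2.
have de := edge_disjoint_cover eE E''E eE''.
have eU : e \subset ~: cover E'' by rewrite subsets_disjoint setCK.
have IH'' : winds (~: cover E'') (partial_sig E'').
  by apply: IH E''E; move: cardE'; rewrite (cardsD1 e E') eE' -/E''; lia.
have DE' : E' = e |: E'' by rewrite setD1K.
rewrite DE' free_setU1 //; apply: winds_eq (winds_contract ij e_ij eU IH'') _ _ => [a|a aU].
  exact: partial_sig_ge0.
by rewrite (partial_sig_setU1 e_ij eE'' de aU) big_bool /with_edge /= addrC.
Qed.

End Circuit.

Lemma extends_agrees (J : finType) (A : {set J}) (a : {set ext_t A}) (x : {set J}) :
  extends a x = agrees A x (embed a).
Proof.
apply/forallP/forallP => H z.
  by apply/implyP => zA; move: (H (Sub z zA)); rewrite -(mem_embed a) SubK.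
by move: (H (val z)); rewrite (valP z) /= mem_embed.
Qed.

Theorem lemma9 (J V : finType) (owner : J -> V) (A : {set J}) (E : {set {set J}})
  (HE : partition E (~: A)) (HE2 : forall e, e \in E -> #|e| = 2)
  (F : forall v : V, {set inc_t owner v} -> rat)
  (HF : forall v : V, windable (F v)) :
  windable (@signature J V owner A E F).
Proof.
have free : ~: cover E = A by rewrite (cover_partition HE) setCK.
have coordsA : coords (fun j => j \in A) = A by apply/setP => z; rewrite inE.
have Hwinds := winds_partial_sig (partition_trivIset HE) HE2 HF (subxx E).
rewrite free -coordsA in Hwinds; apply: (windable_of_winds Hwinds) => a.
by apply: eq_bigl => x; rewrite free extends_agrees.
Qed.
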